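(* Let $3\le n\le m$, let $g_1,\dots,g_n\in\mathbb{F}_{2^m}$ be linearly independent over $\mathbb{F}_2$, and let $\mathcal{G}$ be the Gabidulin code over $\mathbb{F}_{2^m}$ (with $q=2$) of dimension $k=1$ with respect to $g_1,\dots,g_n$. Let $f(x)=x^4+bx^2+cx$ with $b,c\in\mathbb{F}_{2^m}$ and $\sigma_f=(f(g_1),\dots,f(g_n))$. Then $\sigma_f$ is not a deep hole of $\mathcal{G}$ in the rank metric if and only if there exist $\beta_1,\beta_2\in\langle g_1,\dots,g_n\rangle$ with $\beta_1\ne0$, $\beta_2\ne0$, $\beta_1\neq\beta_2$ and $\beta_1^2+\beta_1\beta_2+\beta_2^2=b$. In particular, if $n=m$, then $\sigma_f$ is a deep hole of $\mathcal{G}$ if and only if $b=0$ and $m$ is odd.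
   Context: $\langle g_1,\dots,g_n\rangle$ is the $\mathbb{F}_2$-span. Rank distance: $d_R(\mathbf{u},\mathbf{v})=\dim_{\mathbb{F}_2}\langle u_1-v_1,\dots,u_n-v_n\rangle$, $d_R(\mathbf{u},C)=\min_{\mathbf{c}\in C}d_R(\mathbf{u},\mathbf{c})$; a deep hole is a word attaining the covering radius $\max_{\mathbf{u}}d_R(\mathbf{u},C)$, which for $\mathcal{G}$ is $n-k=n-1$. The Gabidulin code of dimension $1$ is $\mathcal{G}=\{(\lambda g_1,\dots,\lambda g_n):\lambda\in\mathbb{F}_{2^m}\}$ (evaluations of $2$-linearized polynomials $\lambda x$ of $2$-degree $<1$). *)

From HB Require Import structures.
From mathcomp Require Import all_boot all_order all_algebra all_field.
Set Implicit Arguments. Unset Strict Implicit. Unset Printing Implicit Defensive.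
Import GRing.Theory.
Local Open Scope ring_scope.

Section RankMetric.
Variable F : finFieldType.

(* F_2-span <v_1,...,v_n>: all F_2-linear combinations = all subset sums. *)
Definition f2span n (v : 'I_n -> F) : {set F} :=
  [set \sum_(i in S) v i | S : {set 'I_n}].

Definition f2indep_on n (v : 'I_n -> F) (S : {set 'I_n}) : bool :=
  [forall T : {set 'I_n},
     (T \subset S) ==> ((\sum_(i in T) v i == 0) ==> (T == set0))].

(* dim_{F_2} <v_1,...,v_n> = rank of the family = max size of an
   F_2-independent subfamily. *)
Definition f2rank n (v : 'I_n -> F) : nat :=
  \max_(S : {set 'I_n} | f2indep_on v S) #|S|.

Definition rank_dist n (u v : {ffun 'I_n -> F}) : nat :=
  f2rank (fun i => u i - v i).

Definition gab1_word n (g : 'I_n -> F) (lam : F) : {ffun 'I_n -> F} :=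
  [ffun i => lam * g i].

(* d_R(u, G) = min over codewords (n is an upper bound, used as neutral). *)
Definition dist_to_gab1 n (g : 'I_n -> F) (u : {ffun 'I_n -> F}) : nat :=
  \big[minn/n]_(lam : F) rank_dist u (gab1_word g lam).

Definition covering_radius_gab1 n (g : 'I_n -> F) : nat :=
  \max_(u : {ffun 'I_n -> F}) dist_to_gab1 g u.

Definition deep_hole_gab1 n (g : 'I_n -> F) (u : {ffun 'I_n -> F}) : Prop :=
  dist_to_gab1 g u = covering_radius_gab1 g.

End RankMetric.

From mathcomp Require Import all_boot all_order all_algebra all_field.
From mathcomp Require Import all_fingroup all_solvable.
From mathcomp Require Import ring zify.
From Stdlib Require Import Classical.

Set Implicit Arguments.
Unset Strict Implicit.
Unset Printing Implicit Defensive.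

Import Order.TTheory GRing.Theory.
Local Open Scope ring_scope.

(** Since the g_i are F_2-independent, T |-> \sum_(i in T) g_i identifies the
  subsets of indices with <g_1, ..., g_n>, and for an F_2-linear map L the
  F_2-relations among the L(g_i) correspond to the nonzero zeros of L in the
  span.  Hence the rank of (L(g_i))_i is at least n-1 exactly when L has at
  most one nonzero zero in the span.  As x^2 - lam x only vanishes at lam, the
  covering radius is n-1, and sigma_f is not a deep hole iff some
  f(x) - lam x has two distinct nonzero zeros beta1, beta2 in the span.  For
  beta <> 0, f(beta) = lam beta means lam = beta^3 + b beta + c, and two such
  beta give the same lam iff beta1^2 + beta1 beta2 + beta2^2 = b.
  When n = m the span is all of F.  The form takes a value b <> 0 at (t y, y)
  whenever t^3 <> 1 and y^2 = b / (t^2 + t + 1), and it takes the value 0 iff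
  F contains a primitive cube root of unity, i.e. iff 3 divides 2^m - 1,
  i.e. iff m is even. *)

Lemma bigminn_le (T : finType) (k : nat) (f : T -> nat) x :
  (\big[minn/k]_(y : T) f y <= f x)%N.
Proof. by rewrite -minEnat; apply: (bigmin_le k x f). Qed.

Lemma bigminn_geP (T : finType) (k j : nat) (f : T -> nat) :
  reflect ((j <= k)%N /\ forall y, (j <= f y)%N) (j <= \big[minn/k]_(y : T) f y)%N.
Proof.
rewrite -minEnat; apply: (iffP (bigmin_geP k j xpredT f)).
  by move=> [jk ge]; split=> // y; apply: ge.
by move=> [jk ge]; split.
Qed.

Lemma eq_f2rank (F : finFieldType) n (v w : 'I_n -> F) :
  v =1 w -> f2rank v = f2rank w.
Proof.
move=> vw; apply: eq_bigl => S; apply: eq_forallb => T.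
by rewrite (eq_bigr _ (fun i _ => vw i)).
Qed.

Section F2Relations.
Variables (F : finFieldType) (n : nat).
Hypothesis pcharF : 2 \in [pchar F].
Implicit Types (v : 'I_n -> F) (S T : {set 'I_n}).

Definition f2relation v T := (T != set0) && (\sum_(i in T) v i == 0).

Lemma big_symdiff_pchar2 v T1 T2 :
  \sum_(i in (T1 :\: T2) :|: (T2 :\: T1)) v i =
  \sum_(i in T1) v i + \sum_(i in T2) v i.
Proof.
rewrite !(big_mkcond (fun i => i \in _)) -big_split /=; apply: eq_bigr => i _.
rewrite !inE; case: (i \in T1); case: (i \in T2) => /=;
  by rewrite ?addr0 ?add0r ?addrr_pchar2.
Qed.

Lemma symdiff_eq0 T1 T2 : ((T1 :\: T2) :|: (T2 :\: T1) == set0) = (T1 == T2).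
Proof. by rewrite setU_eq0 !setD_eq0 eqEsubset. Qed.

Lemma f2relation_symdiff v T1 T2 :
  f2relation v T1 -> f2relation v T2 -> T1 != T2 ->
  f2relation v ((T1 :\: T2) :|: (T2 :\: T1)).
Proof.
move=> /andP[_ /eqP s1] /andP[_ /eqP s2] T12.
by rewrite /f2relation symdiff_eq0 T12 big_symdiff_pchar2 s1 s2 addr0 /=.
Qed.

Lemma f2indep_on_relation v S T :
  f2indep_on v S -> f2relation v T -> ~~ (T \subset S).
Proof.
move=> /forallP/(_ T) indS /andP[T0 sT]; apply: contra T0 => TS.
by move: indS; rewrite TS sT.
Qed.

Lemma f2rank_relation v T : f2relation v T -> (f2rank v <= n.-1)%N.
Proof.
move=> relT; apply/bigmax_leqP => S indS.
have /subsetPn[a aT aS] := f2indep_on_relation indS relT.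
rewrite -[n in n.-1]card_ord -(cardsC1 a); apply/subset_leq_card/subsetP => x xS.
by rewrite !inE; apply: contraNneq aS => <-.
Qed.

Lemma f2rank_two_relations v T1 T2 :
  f2relation v T1 -> f2relation v T2 -> T1 != T2 -> (f2rank v <= n.-2)%N.
Proof.
move=> rel1 rel2 T12; apply/bigmax_leqP => S indS.
(* Each relation leaves S; if rel1 and rel2 only leave it through the same
   index a, their symmetric difference leaves it through another one. *)
have rel3 := f2relation_symdiff rel1 rel2 T12.
have [a [b [ab aS bS]]] : exists a b, [/\ a != b, a \notin S & b \notin S].
  have /subsetPn[a aT1 aS] := f2indep_on_relation indS rel1.
  have /subsetPn[b bT2 bS] := f2indep_on_relation indS rel2.
  have [eab | nab] := eqVneq a b; last by exists a, b.
  have /subsetPn[c cT3 cS] := f2indep_on_relation indS rel3.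
  exists a, c; split=> //; apply: contraTneq cT3 => <-.
  by rewrite !inE aT1 eab bT2.
have : S \subset ~: [set a; b].
  apply/subsetP => x xS; rewrite !inE negb_or.
  by apply/andP; split; [apply: contraNneq aS | apply: contraNneq bS] => <-.
move/subset_leq_card; have := cardsC [set a; b]; rewrite cards2 ab card_ord; lia.
Qed.

Lemma f2rank_unique_relation v :
  {in f2relation v &, forall T1 T2, T1 = T2} -> (n.-1 <= f2rank v)%N.
Proof.
move=> uniq_rel; have [T0 rel0 | norel] := pickP (f2relation v).
  have /set0Pn[a aT0] : T0 != set0 by case/andP: rel0.
  have indep : f2indep_on v [set~ a].
    apply/forallP => T; apply/implyP => TS; apply/implyP => sT.
    apply: contraTT TS => T0'.
    have -> : T = T0 by apply: uniq_rel; rewrite // unfold_in /f2relation T0' sT.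
    by apply/subsetPn; exists a; rewrite ?inE ?eqxx.
  by apply: leq_trans (leq_bigmax_cond _ indep); rewrite cardsC1 card_ord.
have indep : f2indep_on v [set: 'I_n].
  apply/forallP => T; apply/implyP => _; apply/implyP => sT.
  by move: (norel T); rewrite /f2relation sT andbT => /negbFE.
apply: leq_trans (leq_bigmax_cond _ indep).
by rewrite cardsT card_ord leq_pred.
Qed.

Lemma f2rank_lt_predE v :
  (1 < n)%N -> (f2rank v < n.-1)%N = (1 < #|[set T | f2relation v T]|)%N.
Proof.
move=> n_gt1; apply/idP/card_gt1P => [lt | [T1 [T2 []]]]; last first.
  rewrite !inE => rel1 rel2 T12.
  by apply: leq_ltn_trans (f2rank_two_relations rel1 rel2 T12) _; lia.
apply/card_gt1P; apply: contraLR lt; rewrite -!leqNgt => le1.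
apply: f2rank_unique_relation => T1 T2 rel1 rel2.
by apply: (card_le1_eqP le1); rewrite inE.
Qed.

End F2Relations.

Section SpanKernel.
Variables (F : finFieldType) (n : nat) (g : 'I_n -> F).
Hypothesis pcharF : 2 \in [pchar F].
Hypothesis g_indep : f2indep_on g [set: 'I_n].

Lemma indep_sum_eq0 (T : {set 'I_n}) : (\sum_(i in T) g i == 0) = (T == set0).
Proof.
apply/idP/eqP => [sT | ->]; last by rewrite big_set0.
by move/forallP/(_ T): g_indep; rewrite subsetT sT => /eqP.
Qed.

Lemma indep_sum_inj : injective (fun T : {set 'I_n} => \sum_(i in T) g i).
Proof.
move=> T1 T2 /= eqT; apply/eqP; rewrite -symdiff_eq0 -indep_sum_eq0.
by rewrite big_symdiff_pchar2 // eqT addrr_pchar2.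
Qed.

Lemma card_f2span : #|f2span g| = (2 ^ n)%N.
Proof.
rewrite card_in_imset; last by move=> T1 T2 _ _; apply: indep_sum_inj.
by rewrite -cardsT -powersetT card_powerset cardsT card_ord.
Qed.

Variable L : F -> F.
Hypotheses (L_add : {morph L : x y / x + y}) (L0 : L 0 = 0).

Definition span_kernel : {set F} := [set x in f2span g | (x != 0) && (L x == 0)].

Lemma card_relations_comp :
  #|[set T | f2relation (fun i => L (g i)) T]| = #|span_kernel|.
Proof.
rewrite -(card_imset _ indep_sum_inj); apply: eq_card => x.
apply/imsetP/setIdP => [[T] | [/imsetP[T _ ->]]]; rewrite ?inE.
  rewrite /f2relation -(big_morph L L_add L0) -indep_sum_eq0.
  move=> /andP[nz kerT] ->.
  by split; [apply: imset_f | rewrite nz].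
move=> /andP[nz kerT]; exists T => //; rewrite inE /f2relation.
by rewrite -(big_morph L L_add L0) -indep_sum_eq0 nz.
Qed.

Lemma f2rank_comp_lt_predE :
  (1 < n)%N -> (f2rank (fun i => L (g i)) < n.-1)%N = (1 < #|span_kernel|)%N.
Proof. by move=> n_gt1; rewrite f2rank_lt_predE // card_relations_comp. Qed.

End SpanKernel.

Section LinearizedQuartic.
Variable F : fieldType.
Hypothesis pcharF : 2 \in [pchar F].
Implicit Types b c x y : F.

Lemma sqrrD_pchar2 x y : (x + y) ^+ 2 = x ^+ 2 + y ^+ 2.
Proof. by rewrite sqrrD mulr2n addrr_pchar2 // addr0. Qed.

Definition lin_quartic b c x := x ^+ 4 + b * x ^+ 2 + c * x.

Lemma lin_quartic_add b c : {morph lin_quartic b c : x y / x + y}.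
Proof.
have expr4 z : z ^+ 4 = (z ^+ 2) ^+ 2 by rewrite -exprM.
by move=> x y; rewrite /lin_quartic !expr4 !sqrrD_pchar2; ring.
Qed.

Lemma lin_quartic0 b c : lin_quartic b c 0 = 0.
Proof. by rewrite /lin_quartic !expr0n !mulr0 !addr0. Qed.

Lemma lin_quartic_eq0 b c x :
  x != 0 -> (lin_quartic b c x == 0) = (x ^+ 3 + b * x + c == 0).
Proof.
move=> nzx; have -> : lin_quartic b c x = x * (x ^+ 3 + b * x + c).
  by rewrite /lin_quartic; ring.
by rewrite mulf_eq0 (negbTE nzx).
Qed.

Lemma cubic_eqE b x y :
  x != y -> (x ^+ 3 + b * x == y ^+ 3 + b * y) = (x ^+ 2 + x * y + y ^+ 2 == b).
Proof.
move=> xy; rewrite -subr_eq0 -[b in RHS]oppr_pchar2 // -addr_eq0.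
have -> : x ^+ 3 + b * x - (y ^+ 3 + b * y) = (x - y) * (x ^+ 2 + x * y + y ^+ 2 + b).
  by ring.
by rewrite mulf_eq0 subr_eq0 (negbTE xy).
Qed.

End LinearizedQuartic.

Section GabidulinDim1.
Variables (F : finFieldType) (n : nat) (g : 'I_n -> F).
Hypothesis pcharF : 2 \in [pchar F].
Hypothesis n_gt1 : (1 < n)%N.
Hypothesis g_indep : f2indep_on g [set: 'I_n].

Lemma rank_dist_gab1_word u lam :
  rank_dist u (gab1_word g lam) = f2rank (fun i => u i - lam * g i).
Proof. by apply: eq_f2rank => i; rewrite ffunE. Qed.

Lemma dist_to_gab1_le u : (dist_to_gab1 g u <= n.-1)%N.
Proof.
have n_gt0 : (0 < n)%N by apply: ltnW.
pose i0 := Ordinal n_gt0.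
have set1_nz : [set i0] != set0 by apply/set0Pn; exists i0; rewrite set11.
have nz_i0 : g i0 != 0 by move: set1_nz; rewrite -(indep_sum_eq0 g_indep) big_set1.
apply: leq_trans (bigminn_le _ _ (u i0 / g i0)) _.
rewrite rank_dist_gab1_word; apply: (@f2rank_relation _ _ _ [set i0]).
by rewrite /f2relation big_set1 divfK // subrr eqxx set1_nz.
Qed.

Lemma covering_radius_gab1E : covering_radius_gab1 g = n.-1.
Proof.
apply/eqP; rewrite eqn_leq; apply/andP; split.
  by apply/bigmax_leqP => u _; apply: dist_to_gab1_le.
apply: leq_trans (leq_bigmax [ffun i => g i ^+ 2]).
apply/bigminn_geP; split=> [|lam]; first exact: leq_pred.
pose L x := x ^+ 2 - lam * x.
have L_add : {morph L : x y / x + y}.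
  by move=> x y; rewrite /L sqrrD_pchar2 //; ring.
have L0 : L 0 = 0 by rewrite /L expr0n mulr0 subr0.
rewrite rank_dist_gab1_word (@eq_f2rank _ _ _ (fun i => L (g i))) => [|i].
  rewrite leqNgt f2rank_comp_lt_predE // -leqNgt.
  have root_lam x : x != 0 -> L x == 0 -> x = lam.
    by move=> nzx; rewrite subr_eq0 => /eqP x2; apply: (mulIf nzx); rewrite -expr2.
  apply/card_le1_eqP => x y; rewrite !inE => /and3P[_ nzx Lx] /and3P[_ nzy Ly].
  by rewrite (root_lam x nzx Lx) (root_lam y nzy Ly).
by rewrite ffunE.
Qed.

Lemma deep_hole_gab1E u :
  deep_hole_gab1 g u <-> [forall lam, n.-1 <= rank_dist u (gab1_word g lam)]%N.
Proof.
rewrite /deep_hole_gab1 covering_radius_gab1E; split=> [dist_u | /forallP ge].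
  have /bigminn_geP[_ ge] : (n.-1 <= dist_to_gab1 g u)%N by rewrite dist_u.
  by apply/forallP.
apply/eqP; rewrite eqn_leq dist_to_gab1_le.
by apply/bigminn_geP; split=> //; apply: leq_pred.
Qed.

Lemma rank_dist_lin_quartic_lt b c lam :
  (rank_dist [ffun i => lin_quartic b c (g i)] (gab1_word g lam) < n.-1)%N =
  (1 < #|span_kernel g (lin_quartic b (c - lam))|)%N.
Proof.
rewrite rank_dist_gab1_word (@eq_f2rank _ _ _ (fun i => lin_quartic b (c - lam) (g i))).
  by rewrite f2rank_comp_lt_predE //; [apply: lin_quartic_add | apply: lin_quartic0].
by move=> i; rewrite ffunE /lin_quartic; ring.
Qed.

Lemma not_deep_hole_lin_quartic b c :
  ~ deep_hole_gab1 g [ffun i => lin_quartic b c (g i)] <->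
  exists x y : F,
    [/\ x \in f2span g, y \in f2span g, x != 0, y != 0 &
        x != y /\ x ^+ 2 + x * y + y ^+ 2 = b].
Proof.
split=> [not_deep | [x [y [xS yS nzx nzy [xy Qb]]]]].
  have /existsP[lam] : [exists lam, ~~ (n.-1 <= rank_dist
      [ffun i => lin_quartic b c (g i)] (gab1_word g lam))%N].
    by rewrite -negb_forall; apply/negP => /deep_hole_gab1E.
  rewrite -ltnNge rank_dist_lin_quartic_lt => /card_gt1P[x [y [+ + xy]]].
  rewrite !inE => /and3P[xS nzx Lx] /and3P[yS nzy Ly].
  exists x, y; split=> //; split=> //; apply/eqP; rewrite -cubic_eqE //.
  rewrite lin_quartic_eq0 // addr_eq0 in Lx; rewrite lin_quartic_eq0 // addr_eq0 in Ly.
  by rewrite (eqP Lx) (eqP Ly).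
set lam := x ^+ 3 + b * x + c.
move/deep_hole_gab1E/forallP/(_ lam); apply/negP.
rewrite -ltnNge rank_dist_lin_quartic_lt; apply/card_gt1P; exists x, y.
rewrite !inE xS yS nzx nzy !lin_quartic_eq0 //; split=> //; apply/eqP.
  by rewrite /lam; ring.
have /eqP cubic_xy : x ^+ 3 + b * x == y ^+ 3 + b * y by rewrite cubic_eqE // Qb.
by rewrite /lam -cubic_xy; ring.
Qed.

End GabidulinDim1.

Lemma expn2_mod3 k : (2 ^ k %% 3 = if odd k then 2 else 1)%N.
Proof. by elim: k => // k IH; rewrite expnS -modnMmr IH /=; case: (odd k). Qed.

Lemma exists_nonzero_not_cube_root1 (F : finFieldType) :
  (4 < #|F|)%N -> exists t : F, t != 0 /\ t ^+ 3 != 1.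
Proof.
move=> F_gt4.
have [t /andP[nzt t3] | none] := pickP [pred t : F | (t != 0) && (t ^+ 3 != 1)].
  by exists t.
have all_roots : all (root ('X^3 - 1)) (enum (predC1 (0 : F))).
  apply/allP => t; rewrite mem_enum /= => nzt; apply/unity_rootP/eqP.
  by move: (none t); rewrite /= -[t != 0]/(t \in predC1 0) nzt => /negbFE.
have nz_p : ('X^3 - 1 : {poly F}) != 0 by rewrite -size_poly_eq0 -polyC1 size_XnsubC.
have := max_poly_roots nz_p all_roots (enum_uniq _).
rewrite -polyC1 size_XnsubC // -cardE cardC1 => lt4.
by have := F_gt4; rewrite -(ltn_predK F_gt4) ltnS leqNgt lt4.
Qed.

Section FiniteFieldChar2.
Variables (F : finFieldType) (m : nat).
Hypothesis card_F : #|F| = (2 ^ m)%N.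

Let pcharF : 2 \in [pchar F] := card_finPcharP card_F (isT : prime 2).

Lemma sqrt_pchar2 (x : F) : (0 < m)%N -> (x ^+ (2 ^ m.-1)) ^+ 2 = x.
Proof. by move=> m_gt0; rewrite -exprM -expnSr prednK // -card_F expf_card. Qed.

Lemma exists_root_X2X1 : (exists t : F, t ^+ 2 + t + 1 = 0) <-> ~~ odd m.
Proof.
split=> [[t t2] | even_m].
  apply/negP => odd_m.
  have t3 : t ^+ 3 = 1.
    apply/eqP; rewrite -subr_eq0.
    have -> : t ^+ 3 - 1 = (t - 1) * (t ^+ 2 + t + 1) by ring.
    by rewrite t2 mulr0.
  have := expf_card t; rewrite card_F (divn_eq (2 ^ m) 3) expn2_mod3 odd_m.
  rewrite exprD mulnC exprM t3 expr1n mul1r => t2t.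
  by move: t2; rewrite t2t addrr_pchar2 // add0r => /eqP; rewrite oner_eq0.
have dvd3 : (3 %| #|[set: {unit F}]|)%N.
  rewrite card_finField_unit card_F -subn1 -eqn_mod_dvd ?expn_gt0 //.
  by rewrite expn2_mod3 (negbTE even_m).
have [u _ ord_u] := Cauchy (isT : prime 3) dvd3.
have u3 : val u ^+ 3 = 1 by rewrite -FinRing.val_unitX -ord_u expg_order.
have u1 : val u != 1.
  apply: contra_eqN ord_u => /eqP u1.
  by rewrite (_ : u = 1%g) ?order1 //; apply: val_inj.
exists (val u); apply/eqP.
have : (val u - 1) * (val u ^+ 2 + val u + 1) == 0.
  have -> : (val u - 1) * (val u ^+ 2 + val u + 1) = val u ^+ 3 - 1 by ring.
  by rewrite u3 subrr.
by rewrite mulf_eq0 subr_eq0 (negbTE u1).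
Qed.

Lemma exists_qform_eq (b : F) : (2 < m)%N ->
  (exists x y : F, [/\ x != 0, y != 0, x != y & x ^+ 2 + x * y + y ^+ 2 = b])
  <-> ~ (b = 0 /\ odd m).
Proof.
move=> m_gt2.
have qformE (t y : F) : (t * y) ^+ 2 + t * y * y + y ^+ 2 = y ^+ 2 * (t ^+ 2 + t + 1).
  by ring.
split=> [[x [y [nzx nzy xy Qb]]] [b0 odd_m] | not_b0_odd].
  have /exists_root_X2X1 : exists t : F, t ^+ 2 + t + 1 = 0.
    exists (x / y); apply: (mulfI (expf_neq0 2 nzy)).
    by rewrite -qformE divfK // Qb b0 mulr0.
  by rewrite odd_m.
have [b0 | nzb] := eqVneq b 0.
  have [t t2] : exists t : F, t ^+ 2 + t + 1 = 0.
    by apply/exists_root_X2X1/negP => odd_m; apply: not_b0_odd.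
  exists t, 1; rewrite oner_neq0 expr1n mulr1 t2 b0; split=> //.
    by apply: contra_eq_neq t2 => ->; rewrite exprS mul0r !add0r oner_neq0.
  by apply: contra_eq_neq t2 => ->; rewrite expr1n addrr_pchar2 // add0r oner_neq0.
have [t [nzt t3]] : exists t : F, t != 0 /\ t ^+ 3 != 1.
  apply: exists_nonzero_not_cube_root1.
  by rewrite card_F (leq_trans _ (leq_pexp2l _ m_gt2)).
have t1 : t != 1 by apply: contraNneq t3 => ->; rewrite expr1n.
have nzq : t ^+ 2 + t + 1 != 0.
  apply: contraNneq t3 => q0; rewrite -subr_eq0.
  have -> : t ^+ 3 - 1 = (t - 1) * (t ^+ 2 + t + 1) by ring.
  by rewrite q0 mulr0.
set y := (b / (t ^+ 2 + t + 1)) ^+ (2 ^ m.-1).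
have y2 : y ^+ 2 = b / (t ^+ 2 + t + 1) by rewrite sqrt_pchar2 // ltnW // ltnW.
have nzy : y != 0 by rewrite expf_neq0 // mulf_neq0 ?invr_eq0.
exists (t * y), y; split=> //.
- by rewrite mulf_neq0.
- by apply: contra_neq t1 => tyy; apply: (mulIf nzy); rewrite mul1r.
- by rewrite qformE y2 divfK.
Qed.

End FiniteFieldChar2.

Theorem proposition7 (F : finFieldType) (m n : nat)
  (hF : #|F| = (2 ^ m)%N) (h3n : (3 <= n)%N) (hnm : (n <= m)%N)
  (g : 'I_n -> F) (hg : f2indep_on g [set: 'I_n]) (b c : F) :
  let sigma := [ffun i => g i ^+ 4 + b * g i ^+ 2 + c * g i] in
  (~ deep_hole_gab1 g sigma <->
     exists beta1 beta2 : F,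
       [/\ beta1 \in f2span g, beta2 \in f2span g,
           beta1 != 0, beta2 != 0 &
           beta1 != beta2 /\ beta1 ^+ 2 + beta1 * beta2 + beta2 ^+ 2 = b])
  /\ (n = m -> (deep_hole_gab1 g sigma <-> b = 0 /\ odd m)).
Proof.
move=> sigma.
have pcharF : 2 \in [pchar F] := card_finPcharP hF (isT : prime 2).
have not_deepE := not_deep_hole_lin_quartic pcharF (ltnW h3n) hg b c.
split=> [// | n_eq_m].
have span_full x : x \in f2span g.
  suff -> : f2span g = [set: F] by rewrite inE.
  by apply/eqP; rewrite eqEcard subsetT cardsT card_f2span // hF n_eq_m leqnn.
have not_deep_qformE : ~ deep_hole_gab1 g sigma <-> ~ (b = 0 /\ odd m).
  have m_gt2 : (2 < m)%N by rewrite -n_eq_m.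
  apply: (iff_trans _ (exists_qform_eq hF b m_gt2)).
  split=> [/not_deepE [x [y [_ _ nzx nzy [xy Qb]]]] | [x [y [nzx nzy xy Qb]]]].
    by exists x, y.
  by apply/not_deepE; exists x, y; split=> //; apply: span_full.
have := classic (deep_hole_gab1 g sigma); have := classic (b = 0 /\ odd m).
tauto.
Qed.
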